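(* Under the full-support assumption, the constant $C_{\bm P}$ is strictly positive; more precisely, there is a constant $c>0$ depending only on $\bm P$ such that $\|\bm P{\bm\pi}\|_\infty\ge c\,\|{\bm\pi}-p({\bm\pi})\|_1$ for every ${\bm\pi}\in\Delta(\mathbb{A})$ with all entries positive.
   Context: $\mathbb{A}$ is a finite set, $\Delta(\mathbb{A})$ the probability simplex, $\bm P\in\mathbb{R}^{\mathbb{A}\times\mathbb{A}}$ skew-symmetric. $\mathbb{M}$ is the set of Nash equilibria: ${\bm\pi}\in\Delta(\mathbb{A})$ with $\max_a(\bm P{\bm\pi})_a\le 0$. Full-support assumption: for every $a$ there exists ${\bm\pi}\in\mathbb{M}$ with $\pi_a>0$. For ${\bm\pi}$ with positive entries, $p({\bm\pi})=\arg\min_{{\bm\pi}'\in\mathbb{M}}D_{\mathrm{KL}}({\bm\pi}'\|{\bm\pi})$ (unique). $C_{\bm P}=\inf\{\|\bm P{\bm\pi}\|_\infty/\|{\bm\pi}-p({\bm\pi})\|_1:\ {\bm\pi}\in\Delta(\mathbb{A})\setminus\mathbb{M},\ \pi_a>0\ \forall a\}$. *)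

From HB Require Import structures.
From mathcomp Require Import all_boot all_order all_algebra.
From mathcomp Require Import reals exp.
Set Implicit Arguments. Unset Strict Implicit. Unset Printing Implicit Defensive.
Import Order.TTheory GRing.Theory Num.Theory.
Local Open Scope ring_scope.

Section Defs.
Variables (R : realType) (A : finType).

Definition matvec (P : A -> A -> R) (pi : A -> R) (a : A) : R :=
  \sum_(b : A) P a b * pi b.

Definition skew_symmetric (P : A -> A -> R) : Prop :=
  forall a b, P a b = - P b a.

Definition simplex (pi : A -> R) : Prop :=
  (forall a, 0 <= pi a) /\ \sum_(a : A) pi a = 1.

Definition nash (P : A -> A -> R) (pi : A -> R) : Prop :=
  simplex pi /\ forall a, matvec P pi a <= 0.

Definition full_support (P : A -> A -> R) : Prop :=
  forall a, exists pi, nash P pi /\ 0 < pi a.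

Definition KL (q pi : A -> R) : R :=
  \sum_(a : A) (if q a == 0 then 0 else q a * ln (q a / pi a)).

(* q is a KL projection of pi onto the Nash set M, i.e. q = p(pi) *)
Definition is_KL_proj (P : A -> A -> R) (pi q : A -> R) : Prop :=
  nash P q /\ forall q', nash P q' -> KL q pi <= KL q' pi.

Definition norm1 (x : A -> R) : R := \sum_(a : A) `|x a|.
Definition normInf (x : A -> R) : R := \big[Num.max/0]_(a : A) `|x a|.

End Defs.

From HB Require Import structures.
From mathcomp Require Import all_boot all_order all_algebra.
From mathcomp Require Import reals sequences exp.
From mathcomp Require Import ring lra.
From Stdlib Require Import Classical.
Import Order.TTheory GRing.Theory Num.Theory.
Set Implicit Arguments. Unset Strict Implicit.
Local Open Scope ring_scope.

(* Full support yields a Nash equilibrium with positive entries, and skew-symmetry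
   then forces [P q = 0] for every equilibrium [q]; the equilibria are those [q] of
   the simplex with [P q = 0]. The KL projection [q] of a positive [pi] is positive
   (relative entropy has infinite slope at the boundary), so its first-order
   condition says that [ln (q / pi)] is orthogonal to the directions [v] with
   [P v = 0] and [sum v = 0], i.e. [ln (q / pi) = P mu + t] for some [mu], [t].
   Any [z = P mu + t] with the sign pattern of [ln (q / pi)], hence of [q - pi],
   gives [sum_a (q_a - pi_a) z_a = <mu, P pi> <= |mu|_1 |P pi|_oo], while the left
   side is at least [min {|z_a| | z_a <> 0} * |pi - q|_1]. Fixing one such [z] for
   each of the finitely many sign patterns makes the constant independent of [pi]. *)

Lemma submx_kermx_orth (F : fieldType) m n (G : 'M[F]_(m, n)) (w : 'rV[F]_n) :
  (forall v : 'rV[F]_n, G *m v^T = 0 -> v *m w^T = 0) -> (w <= G)%MS.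
Proof.
move=> orth; set K := kermx G^T.
have KG : K *m G^T = 0 := mulmx_ker _.
have Kw : K *m w^T = 0.
  apply/row_matrixP => i; rewrite row_mul row0; apply: orth.
  by rewrite -[G]trmxK -trmx_mul -row_mul KG row0 trmx0.
have wK : (w <= kermx K^T)%MS.
  by apply/sub_kermxP; rewrite -(trmxK w) -trmx_mul Kw trmx0.
have GK : (G <= kermx K^T)%MS.
  by apply/sub_kermxP; rewrite -(trmxK G) -trmx_mul KG trmx0.
have rankK : \rank (kermx K^T) = \rank G.
  by rewrite mxrank_ker mxrank_tr /K mxrank_ker mxrank_tr subKn // rank_leq_col.
have [_] := mxrank_leqif_sup GK.
by rewrite rankK eqxx => /esym KG_eq; apply: submx_trans wK KG_eq.
Qed.

Section PositiveBounds.
Variable R : realFieldType.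

Lemma uniform_pos_bound (T : finType) (K : T -> R -> Prop) :
  (forall t c c', 0 < c' -> c' <= c -> K t c -> K t c') ->
  (forall t, exists2 c, 0 < c & K t c) -> exists2 c, 0 < c & forall t, K t c.
Proof.
move=> Kmono Kex.
suff [c c0 Kc] : exists2 c, 0 < c & forall t, t \in enum T -> K t c.
  by exists c => // t; apply: Kc; rewrite mem_enum.
elim: (enum T) => [|t l [c c0 Kc]]; first by exists 1.
have [ct ct0 Kct] := Kex t.
have m0 : 0 < Num.min c ct by rewrite lt_min c0 ct0.
exists (Num.min c ct) => // u; rewrite inE => /orP[/eqP -> | ul].
  by apply: (Kmono _ ct) => //; rewrite ge_min lexx orbT.
by apply: (Kmono _ c) => //; [rewrite ge_min lexx | apply: Kc].
Qed.

Lemma nonzero_bounded_away (T : finType) (z : T -> R) :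
  exists2 c, 0 < c & forall t, z t != 0 -> c <= `|z t|.
Proof.
apply: (uniform_pos_bound (K := fun t c => z t != 0 -> c <= `|z t|)).
  by move=> t c c' _ c'c Kc /Kc; apply: le_trans.
move=> t; have [-> | zt] := eqVneq (z t) 0; first by exists 1.
by exists `|z t|; rewrite ?normr_gt0.
Qed.

Lemma ge0_of_quadratic_lb (G K s0 : R) : 0 < s0 ->
  (forall s, 0 < s -> s <= s0 -> 0 <= s * G + s ^+ 2 * K) -> 0 <= G.
Proof.
move=> s00 lb; rewrite leNgt; apply/negP => G0.
have K1 : 0 < `|K| + 1 by rewrite ltr_pwDr // normr_ge0.
pose s := Num.min s0 (- G / (2 * (`|K| + 1))).
have s0p : 0 < s by rewrite lt_min s00 divr_gt0 ?mulr_gt0 // oppr_gt0.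
have sK : s * `|K| <= - G / 2.
  have : s <= - G / (2 * (`|K| + 1)) by rewrite ge_min lexx orbT.
  rewrite ler_pdivlMr ?mulr_gt0 // => h.
  have : s * `|K| <= s * (`|K| + 1) by rewrite ler_wpM2l ?ltW //; lra.
  lra.
have ss0 : s <= s0 by rewrite ge_min lexx.
have := lb s s0p ss0.
have : s ^+ 2 * K <= s * (s * `|K|).
  by rewrite expr2 -mulrA !ler_pM2l // ler_norm.
have : s * (s * `|K|) <= s * (- G / 2) by rewrite ler_pM2l.
have : s * G < 0 by rewrite pmulr_rlt0.
lra.
Qed.

End PositiveBounds.

Section RelativeEntropy.
Variable R : realType.

Definition relent (x p : R) : R := if x == 0 then 0 else x * ln (x / p).

Lemma KLE (A : finType) (q pi : A -> R) : KL q pi = \sum_a relent (q a) (pi a).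
Proof. by []. Qed.

Lemma relent_pos (x p : R) : 0 < x -> relent x p = x * ln (x / p).
Proof. by move=> x0; rewrite /relent gt_eqF. Qed.

Lemma ln_le_subr1 (y : R) : 0 < y -> ln y <= y - 1.
Proof.
by move=> y0; have := @le_ln1Dx R (y - 1); rewrite addrCA subrr addr0; apply; lra.
Qed.

Lemma relent_le_quadratic (q x p : R) : 0 < q -> 0 <= x -> 0 < p ->
  relent x p - relent q p <= (x - q) * (1 + ln (q / p)) + (x - q) ^+ 2 / q.
Proof.
move=> q0 x0 p0; rewrite (relent_pos _ q0).
have qq : q ^+ 2 / q = q by rewrite expr2 mulfK ?gt_eqF.
have [-> | xpos] := eqVneq x 0.
  by rewrite /relent eqxx !sub0r sqrrN qq; lra.
have {}x0 : 0 < x by rewrite lt_def xpos.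
rewrite relent_pos //.
have -> : x / p = (x / q) * (q / p) by field; rewrite ?gt_eqF.
rewrite lnM ?posrE ?divr_gt0 //.
have : x * ln (x / q) <= x * (x / q - 1).
  by rewrite ler_pM2l // ln_le_subr1 // divr_gt0.
have -> : x * (x / q - 1) = (x - q) + (x - q) ^+ 2 / q by field; rewrite gt_eqF.
lra.
Qed.

Lemma relent_scale (v p s : R) : 0 < p -> 0 < s -> 0 <= v ->
  relent (s * v) p = s * relent v p + s * ln s * v.
Proof.
move=> p0 s0; rewrite le_eqVlt => /orP[/eqP <- | v0].
  by rewrite /relent !(mulr0, eqxx, addr0).
rewrite !relent_pos ?mulr_gt0 // -[s * v / p]mulrA lnM ?posrE ?divr_gt0 //; ring.
Qed.

Lemma relent_shift_le (q v p s : R) : 0 <= q -> 0 < p -> 0 < s ->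
  (q = 0 -> 0 <= v) -> 0 <= q + s * v ->
  relent (q + s * v) p - relent q p <=
    s * (if q == 0 then relent v p else v * (1 + ln (q / p)))
    + s ^+ 2 * (if q == 0 then 0 else v ^+ 2 / q)
    + s * ln s * (if q == 0 then v else 0).
Proof.
move=> q0 p0 s0 v0 x0; have [qz | qnz] := eqVneq q 0.
  rewrite qz add0r relent_scale ?v0 // {2}/relent eqxx; lra.
have {}q0 : 0 < q by rewrite lt_def qnz.
have := relent_le_quadratic q0 x0 p0.
rewrite [q + _]addrC addrK mulr0 addr0.
suff -> : s * v * (1 + ln (q / p)) + (s * v) ^+ 2 / q =
          s * (v * (1 + ln (q / p))) + s ^+ 2 * (v ^+ 2 / q) by [].
by field; rewrite gt_eqF.
Qed.

End RelativeEntropy.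

Section NashSet.
Variables (R : realType) (A : finType) (P : A -> A -> R).

Lemma matvec_shift (q v : A -> R) (s : R) b :
  matvec P (fun a => q a + s * v a) b = matvec P q b + s * matvec P v b.
Proof. by rewrite /matvec mulr_sumr -big_split; apply: eq_bigr => a _ /=; ring. Qed.

Lemma matvecB (x y : A -> R) b :
  matvec P (fun a => x a - y a) b = matvec P x b - matvec P y b.
Proof. by rewrite /matvec -sumrB; apply: eq_bigr => a _; rewrite mulrBr. Qed.

Lemma nash_shift (q v : A -> R) (s : R) : nash P q ->
  (forall a, 0 <= q a + s * v a) -> \sum_a v a = 0 ->
  (forall b, matvec P q b + s * matvec P v b <= 0) ->
  nash P (fun a => q a + s * v a).
Proof.
move=> [[_ q1] _] x0 v0 Px; split; first split => //.
  by rewrite big_split /= -mulr_sumr q1 v0 mulr0 addr0.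
by move=> b; rewrite matvec_shift.
Qed.

Lemma nash_conv (q y : A -> R) (s : R) : nash P q -> nash P y -> 0 <= s <= 1 ->
  nash P (fun a => q a + s * (y a - q a)).
Proof.
move=> nq ny /andP[s0 s1]; have [[q0 q1] Pq] := nq; have [[y0 y1] Py] := ny.
apply: nash_shift => //.
- by move=> a; have := q0 a; have := y0 a; nra.
- by rewrite sumrB q1 y1 subrr.
- by move=> b; rewrite matvecB; have := Pq b; have := Py b; nra.
Qed.

Lemma exists_interior_nash (a0 : A) : full_support P ->
  exists y, nash P y /\ forall a, 0 < y a.
Proof.
move=> fs.
suff [y [ny ypos]] : exists y, nash P y /\ forall a, a \in enum A -> 0 < y a.
  by exists y; split => // a; apply: ypos; rewrite mem_enum.
elim: (enum A) => [|t l [y [ny ypos]]].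
  by have [y [ny _]] := fs a0; exists y.
have [z [nz zt]] := fs t.
exists (fun a => y a + 2^-1 * (z a - y a)); split.
  by apply: nash_conv => //; apply/andP; split; lra.
have [[y0 _] _] := ny; have [[z0 _] _] := nz.
move=> u; rewrite inE => /orP[/eqP -> | ul]; first by have := y0 t; lra.
by have := ypos u ul; have := z0 u; lra.
Qed.

Lemma dot_matvec_skew (x y : A -> R) : skew_symmetric P ->
  \sum_a x a * matvec P y a = - \sum_b y b * matvec P x b.
Proof.
move=> sk; rewrite /matvec.
under eq_bigr => a _ do rewrite mulr_sumr.
rewrite exchange_big -sumrN; apply: eq_bigr => b _.
rewrite mulr_sumr -sumrN; apply: eq_bigr => a _; rewrite (sk a b); ring.
Qed.

Lemma nash_matvec0 (y q : A -> R) : skew_symmetric P ->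
  nash P y -> (forall a, 0 < y a) -> nash P q -> forall a, matvec P q a = 0.
Proof.
move=> sk [[y0 _] Py] ypos [[q0 _] Pq].
have terms_ge0 : forall a, true -> 0 <= - (y a * matvec P q a).
  by move=> a _; rewrite oppr_ge0 (mulr_ge0_le0 (ltW (ypos a))).
have sum0 : \sum_a - (y a * matvec P q a) = 0.
  apply/eqP; rewrite eq_le sumr_ge0 // andbT sumrN oppr_le0 dot_matvec_skew //.
  by rewrite oppr_ge0; apply: sumr_le0 => b _; rewrite (mulr_ge0_le0 (q0 b)).
move=> a; have := psumr_eq0P terms_ge0 sum0 (i := a) isT; move/eqP.
by rewrite oppr_eq0 mulf_eq0 gt_eqF //= => /eqP.
Qed.

Definition KL_slope (q v pi : A -> R) : R :=
  \sum_a (if q a == 0 then relent (v a) (pi a) else v a * (1 + ln (q a / pi a))).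

Definition KL_curv (q v : A -> R) : R :=
  \sum_a (if q a == 0 then 0 else v a ^+ 2 / q a).

Definition boundary_mass (q v : A -> R) : R :=
  \sum_a (if q a == 0 then v a else 0).

Lemma KL_shift_le (q v pi : A -> R) (s : R) :
  (forall a, 0 <= q a) -> (forall a, 0 < pi a) -> 0 < s ->
  (forall a, q a = 0 -> 0 <= v a) -> (forall a, 0 <= q a + s * v a) ->
  KL (fun a => q a + s * v a) pi - KL q pi <=
    s * KL_slope q v pi + s ^+ 2 * KL_curv q v + s * ln s * boundary_mass q v.
Proof.
move=> q0 pipos s0 v0 x0.
rewrite !KLE -sumrB /KL_slope /KL_curv /boundary_mass !mulr_sumr -!big_split.
by apply: ler_sum => a _ /=; apply: relent_shift_le (q0 a) (pipos a) s0 (v0 a) (x0 a).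
Qed.

Lemma KL_proj_pos (pi q : A -> R) : full_support P -> (forall a, 0 < pi a) ->
  is_KL_proj P pi q -> forall a, 0 < q a.
Proof.
move=> fs pipos [nq qmin] a; have [[q0 _] _] := nq.
have [y [ny ypos]] := exists_interior_nash a fs.
rewrite lt_def q0 andbT; apply/eqP => qa0.
pose v b := y b - q b.
have v0 : forall b, q b = 0 -> 0 <= v b by move=> b qb0; rewrite /v qb0 subr0 ltW.
set G := KL_slope q v pi; set K := KL_curv q v; set Y := boundary_mass q v.
have Y0 : 0 < Y.
  rewrite /Y /boundary_mass (bigD1 a) //= qa0 eqxx /v qa0 subr0 ltr_pwDl ?ypos //.
  by apply: sumr_ge0 => b _; case: eqP => // /v0.
(* The [s ln s] term of the boundary coordinate beats the other terms for small [s]. *)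
pose s := expR (- ((`|G| + `|K| + 1) / Y)).
have s0 : 0 < s := expR_gt0 _.
have N0 : 0 < `|G| + `|K| + 1 by have := normr_ge0 G; have := normr_ge0 K; lra.
have s1 : s <= 1 by rewrite /s expR_le1 oppr_le0 divr_ge0 ?ltW.
have Ys : ln s * Y = - (`|G| + `|K| + 1) by rewrite /s expRK mulNr divfK ?gt_eqF.
have nx : nash P (fun b => q b + s * v b) by apply: nash_conv => //; rewrite ltW.
have := KL_shift_le q0 pipos s0 v0 nx.1.1.
have := qmin _ nx.
have sK : s * K <= `|K|.
  by apply: le_trans (ler_piMl (normr_ge0 K) s1); rewrite ler_pM2l ?ler_norm.
have sG : G <= `|G| := ler_norm G.
have -> : s * G + s ^+ 2 * K + s * ln s * Y = s * (G + s * K + ln s * Y) by ring.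
rewrite Ys; have : s * (G + s * K - (`|G| + `|K| + 1)) < 0.
  by rewrite pmulr_rlt0 //; lra.
lra.
Qed.

Lemma KL_proj_orth_ge0 (pi q v : A -> R) : (forall a, 0 < pi a) ->
  is_KL_proj P pi q -> (forall a, 0 < q a) ->
  (forall b, matvec P v b = 0) -> \sum_a v a = 0 ->
  0 <= \sum_a v a * ln (q a / pi a).
Proof.
move=> pipos [nq qmin] qpos Pv v0.
have [r r0 xr] : exists2 r, 0 < r &
    forall a s, 0 <= s -> s <= r -> 0 <= q a + s * v a.
  apply: (uniform_pos_bound (K := fun a c =>
      forall s, 0 <= s -> s <= c -> 0 <= q a + s * v a)).
    by move=> a c c' _ c'c Kc s s0 sc'; apply: Kc => //; apply: le_trans c'c.
  move=> a; have v1 : 0 < `|v a| + 1 by rewrite ltr_pwDr ?normr_ge0.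
  exists (q a / (`|v a| + 1)); first by rewrite divr_gt0.
  move=> s s0; rewrite ler_pdivlMr // => sv.
  have : s * - v a <= s * `|v a|.
    by rewrite ler_wpM2l // -normrN ler_norm.
  have := qpos a; nra.
have qnz : forall a, (q a == 0) = false by move=> a; rewrite gt_eqF.
have slope : KL_slope q v pi = \sum_a v a * ln (q a / pi a).
  rewrite /KL_slope; under eq_bigr => a _ do rewrite qnz mulrDr mulr1.
  by rewrite big_split /= v0 add0r.
have nomass : boundary_mass q v = 0.
  by rewrite /boundary_mass; under eq_bigr => a _ do rewrite qnz; rewrite big1.
apply: (ge0_of_quadratic_lb (K := KL_curv q v) r0) => s s0 sr.
have xs : forall a, 0 <= q a + s * v a by move=> a; apply: xr => //; apply: ltW.
have nx : nash P (fun a => q a + s * v a).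
  by apply: nash_shift => // b; rewrite Pv mulr0 addr0; apply: nq.2.
have vz : forall a, q a = 0 -> 0 <= v a by move=> a /eqP; rewrite qnz.
have := KL_shift_le (fun a => ltW (qpos a)) pipos s0 vz xs.
rewrite slope nomass mulr0 addr0; have := qmin _ nx; lra.
Qed.

Lemma KL_proj_orth (pi q v : A -> R) : (forall a, 0 < pi a) ->
  is_KL_proj P pi q -> (forall a, 0 < q a) ->
  (forall b, matvec P v b = 0) -> \sum_a v a = 0 ->
  \sum_a v a * ln (q a / pi a) = 0.
Proof.
move=> pipos hq qpos Pv v0; apply/eqP; rewrite eq_le KL_proj_orth_ge0 // andbT.
have PNv : forall b, matvec P (fun a => - v a) b = 0.
  move=> b; have := Pv b; rewrite /matvec => Pvb.
  by under eq_bigr => a _ do rewrite mulrN; rewrite sumrN Pvb oppr0.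
have := KL_proj_orth_ge0 pipos hq qpos PNv; rewrite sumrN v0 oppr0 => /(_ erefl).
by under eq_bigr => a _ do rewrite mulNr; rewrite sumrN oppr_ge0.
Qed.

Lemma orth_ker_affine (w : A -> R) :
  (forall v, (forall b, matvec P v b = 0) -> \sum_a v a = 0 ->
     \sum_a v a * w a = 0) ->
  exists (mu : A -> R) (t : R), forall a, w a = \sum_b mu b * P b a + t.
Proof.
move=> orth; pose n := #|A|.
pose G : 'M[R]_(n + 1, n) :=
  col_mx (\matrix_(i, j) P (enum_val i) (enum_val j)) (const_mx 1).
pose wr : 'rV[R]_n := \row_j w (enum_val j).
have /submxP [D wD] : (wr <= G)%MS.
  apply: submx_kermx_orth => v Gv; pose vf a := v 0 (enum_rank a).
  have vfE : forall j, vf (enum_val j) = v 0 j by move=> j; rewrite /vf enum_valK.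
  have Pvf : forall a, matvec P vf a = 0.
    move=> a; have <- : (G *m v^T) (lshift 1 (enum_rank a)) 0 = matvec P vf a.
      rewrite mxE /matvec [RHS]big_enum_val; apply: eq_bigr => j _.
      by rewrite vfE col_mxEu !mxE enum_rankK.
    by rewrite Gv mxE.
  have sum_vf : \sum_a vf a = 0.
    have <- : (G *m v^T) (rshift n 0) 0 = \sum_a vf a.
      rewrite mxE [RHS]big_enum_val; apply: eq_bigr => j _.
      by rewrite vfE col_mxEd !mxE mul1r.
    by rewrite Gv mxE.
  apply/matrixP => i j; rewrite !ord1 !mxE -[RHS](orth _ Pvf sum_vf).
  by rewrite [RHS]big_enum_val; apply: eq_bigr => k _; rewrite vfE !mxE.
exists (fun b => D 0 (lshift 1 (enum_rank b))), (D 0 (rshift n 0)) => a.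
have -> : w a = wr 0 (enum_rank a) by rewrite mxE enum_rankK.
rewrite wD mxE big_split_ord /= big_ord1 col_mxEd mxE mulr1.
congr (_ + _); rewrite [RHS]big_enum_val; apply: eq_bigr => i _.
by rewrite col_mxEu !mxE enum_rankK enum_valK.
Qed.

Definition affine_matvec (mu : A -> R) (t : R) (a : A) : R := matvec P mu a + t.

Definition sign_pattern (z : A -> R) : {set A} * {set A} :=
  ([set a | 0 < z a], [set a | z a < 0]).

Lemma sign_pattern_sg (z z' : A -> R) :
  sign_pattern z = sign_pattern z' -> forall a, Num.sg (z a) = Num.sg (z' a).
Proof.
case=> /setP pos /setP neg a; have := pos a; have := neg a; rewrite !inE.
by case: (sgrP (z a)); case: (sgrP (z' a)).
Qed.

Lemma affine_sign_pattern_bound : exists2 c, 0 < c &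
  forall (mu0 : A -> R) (t0 : R), exists (mu : A -> R) (t : R),
    sign_pattern (affine_matvec mu t) = sign_pattern (affine_matvec mu0 t0) /\
    forall a, affine_matvec mu t a != 0 ->
      c * (norm1 mu + 1) <= `|affine_matvec mu t a|.
Proof.
pose K p c := forall mu0 t0, sign_pattern (affine_matvec mu0 t0) = p ->
  exists mu t, sign_pattern (affine_matvec mu t) = p /\
    forall a, affine_matvec mu t a != 0 ->
      c * (norm1 mu + 1) <= `|affine_matvec mu t a|.
suff [c c0 Kc] : exists2 c, 0 < c & forall p, K p c.
  by exists c => // mu0 t0; apply: Kc.
apply: uniform_pos_bound.
  move=> p c c' _ c'c Kpc mu0 t0 /Kpc[mu [t [pat bnd]]].
  exists mu, t; split => // a /bnd; apply: le_trans.
  by rewrite ler_wpM2r // addr_ge0 // sumr_ge0.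
move=> p; case: (classic (exists mu0 t0, sign_pattern (affine_matvec mu0 t0) = p)).
  move=> [mu [t pat]]; have [c c0 cz] := nonzero_bounded_away (affine_matvec mu t).
  have n1 : 0 < norm1 mu + 1 by rewrite ltr_pwDr // sumr_ge0.
  have n1' : norm1 mu + 1 != 0 by rewrite gt_eqF.
  exists (c / (norm1 mu + 1)); first by rewrite divr_gt0.
  by move=> mu0 t0 _; exists mu, t; split => // a; rewrite divfK //; apply: cz.
by move=> nopat; exists 1 => // mu0 t0 pat; case: nopat; exists mu0, t0.
Qed.

Lemma normInf_ge (x : A -> R) b : `|x b| <= normInf x.
Proof. by rewrite /normInf (bigD1 b) //= le_max lexx. Qed.

Lemma normInf_ge0 (x : A -> R) : 0 <= normInf x.
Proof. by rewrite /normInf; elim/big_rec: _ => // a y _ y0; rewrite le_max y0 orbT. Qed.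

Lemma dot_le_norm1_normInf (mu x : A -> R) :
  \sum_b mu b * x b <= norm1 mu * normInf x.
Proof.
rewrite /norm1 mulr_suml; apply: ler_sum => b _.
by apply: le_trans (ler_norm _) _; rewrite normrM ler_wpM2l ?normInf_ge.
Qed.

Lemma mulr_sg_eq (x y : R) : Num.sg x = Num.sg y -> x * y = `|x| * `|y|.
Proof.
move=> e; rewrite {1}[x]numEsg {1}[y]numEsg -e mulrACA -expr2 sqr_sg.
by case: eqP => [->|_]; rewrite ?normr0 ?mul0r ?mul1r.
Qed.

Lemma sg_ln_ratio (q p : R) : 0 < q -> 0 < p -> Num.sg (ln (q / p)) = Num.sg (q - p).
Proof.
move=> q0 p0; have qp0 : 0 < q / p by rewrite divr_gt0.
case: (ltrgtP q p) => [qp | pq | ->].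
- rewrite (ltr0_sg (ln_lt0 _)) ?ltr0_sg ?subr_lt0 //.
  by rewrite qp0 /= ltr_pdivrMr // mul1r.
- by rewrite (gtr0_sg (ln_gt0 _)) ?gtr0_sg ?subr_gt0 // ltr_pdivlMr // mul1r.
- by rewrite divff ?gt_eqF // ln1 subrr.
Qed.

Lemma affine_certificate_bound (pi q mu : A -> R) (t c : R) :
  skew_symmetric P -> simplex pi -> simplex q -> (forall a, matvec P q a = 0) ->
  0 <= c -> (forall a, Num.sg (affine_matvec mu t a) = Num.sg (q a - pi a)) ->
  (forall a, affine_matvec mu t a != 0 ->
     c * (norm1 mu + 1) <= `|affine_matvec mu t a|) ->
  c * norm1 (fun a => pi a - q a) <= normInf (matvec P pi).
Proof.
move=> sk [_ pi1] [_ q1] Pq c0 sg_eq bnd; set z := affine_matvec mu t in sg_eq bnd *.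
have lower : c * (norm1 mu + 1) * norm1 (fun a => pi a - q a) <=
             \sum_a (q a - pi a) * z a.
  rewrite /norm1 mulr_sumr; apply: ler_sum => a _.
  rewrite (mulr_sg_eq (esym (sg_eq a))) distrC mulrC.
  have [za | /bnd za] := eqVneq (z a) 0.
    move: (sg_eq a); rewrite za sgr0 => /esym/eqP; rewrite sgr_eq0 => /eqP ->.
    by rewrite normr0 !mul0r.
  by rewrite ler_wpM2l.
have middle : \sum_a (q a - pi a) * z a = \sum_b mu b * matvec P pi b.
  under eq_bigr => a _ do rewrite /z /affine_matvec mulrDr.
  rewrite big_split /= -mulr_suml sumrB q1 pi1 subrr mul0r addr0.
  rewrite dot_matvec_skew // -sumrN; apply: eq_bigr => b _.
  by rewrite matvecB Pq sub0r mulrN opprK.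
have upper := dot_le_norm1_normInf mu (matvec P pi); rewrite -middle in upper.
have S0 : 0 <= norm1 mu by apply: sumr_ge0.
move: lower upper (normInf_ge0 (matvec P pi)).
set X := c * norm1 _; set S := norm1 mu; set N := normInf _.
have -> : c * (S + 1) * norm1 (fun a => pi a - q a) = S * X + X by rewrite /X; ring.
move=> lower upper N0; rewrite leNgt; apply/negP => NX.
have : S * N <= S * X by rewrite ler_wpM2l // ltW.
lra.
Qed.

Lemma log_ratio_affine (pi q : A -> R) : skew_symmetric P -> full_support P ->
  (forall a, 0 < pi a) -> is_KL_proj P pi q ->
  exists (mu : A -> R) (t : R), forall a, ln (q a / pi a) = affine_matvec mu t a.
Proof.
move=> sk fs pipos hq; have qpos := KL_proj_pos fs pipos hq.
have [mu [t w_eq]] :=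
  orth_ker_affine (fun v Pv v0 => KL_proj_orth pipos hq qpos Pv v0).
exists (fun b => - mu b), t => a; rewrite w_eq /affine_matvec /matvec.
by congr (_ + _); apply: eq_bigr => b _; rewrite (sk a b) mulrNN mulrC.
Qed.

End NashSet.

Theorem mainTheorem7 (R : realType) (A : finType) (P : A -> A -> R) :
  skew_symmetric P -> full_support P ->
  exists c : R, 0 < c /\
    forall pi : A -> R, simplex pi -> (forall a, 0 < pi a) ->
      forall q : A -> R, is_KL_proj P pi q ->
        c * norm1 (fun a => pi a - q a) <= normInf (matvec P pi).
Proof.
move=> sk fs; have [c c0 pattern_bound] := affine_sign_pattern_bound P.
exists c; split => // pi spi pipos q hq; have [nq _] := hq.
have Pq : forall a, matvec P q a = 0.
  move=> a; have [y [ny ypos]] := exists_interior_nash a fs.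
  exact: nash_matvec0 sk ny ypos nq a.
have [mu0 [t0 log_eq]] := log_ratio_affine sk fs pipos hq.
have [mu [t [pat bnd]]] := pattern_bound mu0 t0.
apply: (affine_certificate_bound sk spi nq.1 Pq (ltW c0) _ bnd) => a.
by rewrite (sign_pattern_sg pat) -log_eq sg_ln_ratio // (KL_proj_pos fs pipos hq).
Qed.
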